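(* If an invariant state is supported on $V\ominus\operatorname{ran}|Z|_1$, then it is supported on $W$.
   Context: Fix integers $N\ge 2$ and $n_1\ge n_2\ge\dots\ge n_N\ge 1$. Let $\mathcal H$ be a finite-dimensional complex Hilbert space with orthonormal basis $\{|-\rangle,|+\rangle\}\cup\{|a_k\rangle:1\le k\le N,\ 0\le a\le n_k-1\}$. For vectors $x,y$, $|x\rangle\langle y|$ denotes the operator $u\mapsto\langle y,u\rangle x$. Put $E_k=\mathrm{span}\{|a_k\rangle:0\le a\le n_k-1\}$, $P_k$ the orthogonal projection onto $E_k$, $P_\pm=|\pm\rangle\langle\pm|$, $\zeta_k=e^{2\pi i/n_k}$, and $\varphi_{a_k}=n_k^{-1/2}\sum_{b=0}^{n_k-1}\zeta_k^{-ba}|b_k\rangle$ for $0\le a\le n_k-1$. For $1\le k\le N-1$ let $Z_k=n_k^{-1/2}\sum_{b=0}^{n_{k+1}-1}\sum_{a=0}^{n_k-1}\zeta_k^{ba}|b_{k+1}\rangle\langle a_k|$ (an operator on $\mathcal H$), $|Z|_k=Z_k^*Z_k$. The transport operator is $Z=\sum_{k=1}^{N-1}Z_k$. Let $\omega$ range over the set $\{\omega_+,\omega_-,\omega_1,\dots,\omega_{N-1}\}$ of (distinct) Bohr frequencies, and let $\Gamma_{\pm,\omega}>0$, $\gamma_{\pm,\omega}\in\mathbb R$ be constants. Kraus operators: $L_{-,\omega_+}=\sqrt{n_1\Gamma_{-,\omega_+}}|\varphi_{0_1}\rangle\langle +|$, $L_{+,\omega_+}=\sqrt{n_1\Gamma_{+,\omega_+}}|+\rangle\langle\varphi_{0_1}|$,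 $L_{-,\omega_k}=\sqrt{\Gamma_{-,\omega_k}}Z_k$, $L_{+,\omega_k}=\sqrt{\Gamma_{+,\omega_k}}Z_k^*$ ($1\le k\le N-1$), $L_{-,\omega_-}=\sqrt{\Gamma_{-,\omega_-}}|-\rangle\langle\varphi_{0_N}|$, $L_{+,\omega_-}=0$. Effective Hamiltonian $H_{\mathrm{eff}}=n_1\gamma_{-,\omega_+}P_+-n_1\gamma_{+,\omega_+}|\varphi_{0_1}\rangle\langle\varphi_{0_1}|+\gamma_{-,\omega_-}|\varphi_{0_N}\rangle\langle\varphi_{0_N}|-\gamma_{+,\omega_-}P_-+\sum_{k=1}^{N-1}(\gamma_{-,\omega_k}|Z|_k-\gamma_{+,\omega_k}P_{k+1})$. The generator is $\mathcal L(\rho)=-i[H_{\mathrm{eff}},\rho]+\sum_{\omega}\sum_{\epsilon=\pm}\big(L_{\epsilon,\omega}\rho L_{\epsilon,\omega}^*-\tfrac12\{L_{\epsilon,\omega}^*L_{\epsilon,\omega},\rho\}\big)$. A state is a positive operator of trace one; it is invariant if $\mathcal L(\rho)=0$; an operator is supported on a subspace $E$ if its range is contained in $E$. The interaction-free subspace is $W=\bigcap_{\omega,\epsilon=\pm}(\ker L_{\epsilon,\omega}\cap\ker L_{\epsilon,\omega}^* )$. $V$ is the orthogonal complement of the set $\{|-\rangle,|+\rangle,Z^n\varphi_{0_1},Z^{*n}\varphi_{0_N},Z^{*s}\varphi_{0_{2m+1}}:0\le n\le N-1,\ 1\le m\le (N-1)/2,\ 1\le s\le 2m\}$. $A\ominus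 B$ denotes $A\cap B^\perp$. *)

From mathcomp Require Import all_boot all_order all_algebra.
From mathcomp Require Import complex.
From mathcomp Require Import reals trigo.
Import Order.TTheory GRing.Theory Num.Theory.
Local Open Scope ring_scope.

Unset Implicit Arguments.
Unset Strict Implicit.
Unset Printing Implicit Defensive.

(*  - the paper's levels k = 1..N are indexed here by k = 0..N-1;           *)
(*    paper's n_k is here  n (k-1);  paper's |a_k> is  ket_site (k-1) a.    *)
(*  - signs epsilon = +/- are booleans: true = +, false = -.                *)
(*  - the Bohr frequencies are OmPlus (omega_+), OmMinus (omega_-) and      *)
(*    OmK k (paper's omega_{k+1}, k = 0..N-2).                              *)
(*  - the Hilbert space is C^basis with orthonormal basis basis, realised   *)
(*    as column vectors 'cV[R[i]]_(dim N n), operators as 'M[R[i]]_(dim N n)*)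
(*    (matrices in that orthonormal basis).                                 *)

Inductive bohr := OmPlus | OmMinus | OmK of nat.

Section Model.

Variable R : realType.
Local Notation C := (R[i]).

Variables (N : nat) (n : nat -> nat).

(* basis: inl false = |->, inl true = |+>, inr (k; a) = |a_k> *)
Definition basis := (bool + {k : 'I_N & 'I_(n k)})%type.
Definition hdim := #|{: basis}|.
Local Notation d := hdim.

Definition rC (x : R) : C := Complex x 0.

Definition site_idx (x : basis) : option (nat * nat) :=
  match x with
  | inl _ => None
  | inr u => Some (nat_of_ord (tag u), nat_of_ord (tagged u))
  end.

Definition ket_site (k a : nat) : 'cV[C]_d :=
  \col_i ((site_idx (enum_val i) == Some (k, a))%:R).
Definition ket_pm (s : bool) : 'cV[C]_d :=
  \col_i ((enum_val i == inl s)%:R).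

Definition adj {p q : nat} (A : 'M[C]_(p, q)) : 'M[C]_(q, p) :=
  (map_mx Num.conj A)^T.
(* inner product <u, v>, antilinear in u *)
Definition dotv (u v : 'cV[C]_d) : C := (adj u *m v) ord0 ord0.
Definition outer (u v : 'cV[C]_d) : 'M[C]_d := u *m adj v.

Definition zeta (k : nat) : C :=
  Complex (cos (2 * pi / (n k)%:R)) (sin (2 * pi / (n k)%:R)).

Definition invsqrt (x : R) : C := rC (Num.sqrt x)^-1.

Definition phi (k a : nat) : 'cV[C]_d :=
  invsqrt (n k)%:R *: \sum_(b < n k) (zeta k ^- (b * a)) *: ket_site k b.

Definition Zk (k : nat) : 'M[C]_d :=
  invsqrt (n k)%:R *:
    \sum_(b < n k.+1) \sum_(a < n k)
       (zeta k ^+ (b * a)) *: outer (ket_site k.+1 b) (ket_site k a).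

Definition Ztr : 'M[C]_d := \sum_(k < N.-1) Zk k.

Definition absZ (k : nat) : 'M[C]_d := adj (Zk k) *m Zk k.

Definition Pk (k : nat) : 'M[C]_d :=
  \sum_(b < n k) outer (ket_site k b) (ket_site k b).
Definition Ppm (s : bool) : 'M[C]_d := outer (ket_pm s) (ket_pm s).

Definition valid_bohr (w : bohr) : bool :=
  match w with OmK k => (k.+1 < N)%N | _ => true end.

Section Kraus.
Variable Gam : bool -> bohr -> R.
Definition kraus : seq 'M[C]_d :=
  [:: rC (Num.sqrt ((n 0)%:R * Gam false OmPlus)) *: outer (phi 0 0) (ket_pm true);
      rC (Num.sqrt ((n 0)%:R * Gam true OmPlus)) *: outer (ket_pm true) (phi 0 0);
      rC (Num.sqrt (Gam false OmMinus)) *: outer (ket_pm false) (phi N.-1 0);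
      0 ]
  ++ flatten [seq [:: rC (Num.sqrt (Gam false (OmK k))) *: Zk k;
                     rC (Num.sqrt (Gam true (OmK k))) *: adj (Zk k)]
             | k <- iota 0 N.-1].
End Kraus.

Section Heff.
Variable gam : bool -> bohr -> R.
Definition Heff : 'M[C]_d :=
  rC ((n 0)%:R * gam false OmPlus) *: Ppm true
  - rC ((n 0)%:R * gam true OmPlus) *: outer (phi 0 0) (phi 0 0)
  + rC (gam false OmMinus) *: outer (phi N.-1 0) (phi N.-1 0)
  - rC (gam true OmMinus) *: Ppm false
  + \sum_(k < N.-1) (rC (gam false (OmK k)) *: absZ k
                     - rC (gam true (OmK k)) *: Pk k.+1).
End Heff.

Definition generator (Gam gam : bool -> bohr -> R) (rho : 'M[C]_d) : 'M[C]_d :=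
  - 'i *: (Heff gam *m rho - rho *m Heff gam)
  + \sum_(L <- kraus Gam)
      (L *m rho *m adj L
       - 2^-1 *: (adj L *m L *m rho + rho *m (adj L *m L))).

Definition positive_op (A : 'M[C]_d) : Prop :=
  forall v : 'cV[C]_d, 0 <= dotv v (A *m v).
Definition is_state (rho : 'M[C]_d) : Prop :=
  positive_op rho /\ \tr rho = 1.
Definition invariant_st (Gam gam : bool -> bohr -> R) (rho : 'M[C]_d) : Prop :=
  generator Gam gam rho = 0.

Definition subsp := 'cV[C]_d -> Prop.
Definition orth (S : subsp) : subsp := fun v => forall u, S u -> dotv u v = 0.
Definition ran (A : 'M[C]_d) : subsp := fun v => exists u, v = A *m u.
Definition capsp (S T : subsp) : subsp := fun v => S v /\ T v.
Definition ominus (S T : subsp) : subsp := capsp S (orth T).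
Definition supported (A : 'M[C]_d) (E : subsp) : Prop := forall u, E (A *m u).

Definition Wsp (Gam : bool -> bohr -> R) : subsp :=
  fun v => forall L, L \in kraus Gam -> L *m v = 0 /\ adj L *m v = 0.

Definition Vgen : subsp := fun u =>
  u = ket_pm false \/ u = ket_pm true
  \/ (exists2 m, (m <= N - 1)%N & u = iter m (mulmx Ztr) (phi 0 0))
  \/ (exists2 m, (m <= N - 1)%N & u = iter m (mulmx (adj Ztr)) (phi N.-1 0))
  \/ (exists m s, [/\ (1 <= m)%N, (m <= (N - 1) %/ 2)%N, (1 <= s)%N,
                      (s <= 2 * m)%N &
                      u = iter s (mulmx (adj Ztr)) (phi (2 * m) 0)]).
Definition Vsp : subsp := orth Vgen.

End Model.

(* Since rho >= 0, <x, rho x> = 0 forces x into the kernel of rho, so the support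
   hypothesis puts |+->, phi_{0_1}, phi_{0_N} and ran |Z|_1 into ker rho.  For x in
   ker rho, invariance gives 0 = <x, L(rho) x> = sum_L <L^* x, rho L^* x>, a sum of
   nonnegative terms, so ker rho is stable under every L^*, hence under Z_k and Z_k^*.
   As n_{k+1} <= n_k, the orthogonality of the characters of Z/n_k makes Z_k Z_k^*
   the identity on E_{k+1}; thus Z_1^* = |Z|_1 Z_1^* maps into ker rho, and by
   induction on k so does every E_k with k >= 2.  Every Kraus operator L and its
   adjoint then map into ker rho, i.e. L rho = L^* rho = 0: ran rho lies in W. *)

From Pilot Require Import Defs.
From mathcomp Require Import all_boot all_order all_algebra.
From mathcomp Require Import complex.
From mathcomp Require Import reals trigo.
From mathcomp Require Import ring lra.
Import Order.TTheory GRing.Theory Num.Theory.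
Local Open Scope ring_scope.
Local Open Scope complex_scope.

Set Implicit Arguments.
Unset Strict Implicit.
Unset Printing Implicit Defensive.

Lemma sum_expr_root1_eq0 (F : idomainType) (w : F) m :
  w ^+ m = 1 -> w != 1 -> \sum_(a < m) w ^+ a = 0.
Proof.
move=> wm w1; apply/eqP; have := subrX1 w m.
by rewrite wm subrr => /esym/eqP; rewrite mulf_eq0 subr_eq0 (negbTE w1).
Qed.

Section RootsOfUnity.
Variable R : realType.
Local Notation C := R[i].

Definition cis (t : R) : C := Complex (cos t) (sin t).

Lemma cos_lt1 (x : R) : 0 < x < pi *+ 2 -> cos x < 1.
Proof.
move=> /andP[x_gt0 x_lt2pi].
have -> : x = (x / 2) *+ 2 by rewrite -mulr_natr divfK // pnatr_eq0.
have sin_gt0 : 0 < sin (x / 2).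
  apply: sin_gt0_pi; rewrite divr_gt0 //= ltr_pdivrMr //.
  by rewrite mulr_natr.
rewrite cos_mulr2n cos2sin2 mulrnBl.
have := exprn_gt0 2 sin_gt0; lra.
Qed.

Lemma cis_exprn (t : R) j : cis t ^+ j = cis (j%:R * t).
Proof.
elim: j => [|j IH]; first by rewrite expr0 mul0r /cis cos0 sin0.
rewrite exprS IH /cis; simpc.
by rewrite -natr1 mulrDl mul1r addrC cosD sinD; congr Complex; ring.
Qed.

Lemma conj_cis_mul (t : R) : Num.conj (cis t) * cis t = 1.
Proof. by rewrite /cis; simpc; rewrite -!expr2 cos2Dsin2 mulrC subrr. Qed.

Variable n : nat -> nat.
Local Notation zeta := (zeta R n).

Lemma zeta_exprn k j : zeta k ^+ j = cis (j%:R * (2 * pi / (n k)%:R)).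
Proof. exact: cis_exprn. Qed.

Lemma conj_zeta_mul k j : Num.conj (zeta k ^+ j) * zeta k ^+ j = 1.
Proof. by rewrite zeta_exprn conj_cis_mul. Qed.

Lemma zeta_expr_order k : (0 < n k)%N -> zeta k ^+ n k = 1.
Proof.
move=> n_gt0; rewrite zeta_exprn mulrC divfK ?pnatr_eq0 -?lt0n //.
by rewrite mulr_natl /cis cos2pi sin2pi.
Qed.

Lemma zeta_exprn_neq1 k j : (0 < j < n k)%N -> zeta k ^+ j != 1.
Proof.
move=> /andP[j_gt0 j_lt]; rewrite zeta_exprn; apply/eqP => -[cos_eq1 _].
have n_gt0 : (0 : R) < (n k)%:R by rewrite ltr0n (ltn_trans j_gt0).
suff : cos (j%:R * (2 * pi / (n k)%:R) : R) < 1 by rewrite cos_eq1 ltxx.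
apply: cos_lt1; have pi_gt0 := pi_gt0 R.
rewrite mulr_gt0 ?ltr0n ?divr_gt0 ?mulr_gt0 //= mulrA ltr_pdivrMr //.
have : (j%:R : R) < (n k)%:R by rewrite ltr_nat.
rewrite -mulr_natr; nra.
Qed.

Lemma zeta_exprn_inj k b b' : (b < n k)%N -> (b' < n k)%N ->
  zeta k ^+ b = zeta k ^+ b' -> b = b'.
Proof.
wlog le_bb' : b b' / (b <= b')%N => [hwlog|].
  by case/orP: (leq_total b b') => le hb hb' e; [|apply/esym]; apply: hwlog.
move=> _ b'_lt e; apply/eqP; rewrite eqn_leq le_bb' /= leqNgt -subn_gt0.
apply/negP => d_gt0.
have d_lt : (0 < b' - b < n k)%N.
  by rewrite d_gt0 (leq_ltn_trans (leq_subr _ _) b'_lt).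
have zb_neq0 : zeta k ^+ b != 0.
  by apply: contra_eq_neq (conj_zeta_mul k b) => ->; rewrite mulr0 eq_sym oner_neq0.
have zd_eq1 : zeta k ^+ (b' - b) = 1.
  by apply: (mulIf zb_neq0); rewrite -exprD subnK // e mul1r.
by have := zeta_exprn_neq1 d_lt; rewrite zd_eq1 eqxx.
Qed.

Lemma zeta_orthogonality k b b' : (b < n k)%N -> (b' < n k)%N ->
  \sum_(a < n k) zeta k ^+ (b * a) * Num.conj (zeta k ^+ (b' * a)) =
  (b == b')%:R * (n k)%:R.
Proof.
move=> b_lt b'_lt; have n_gt0 : (0 < n k)%N by apply: leq_ltn_trans b_lt.
case: eqVneq => [<-|b_neq].
  under eq_bigr do rewrite mulrC conj_zeta_mul.
  by rewrite sumr_const card_ord mul1r.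
set w := zeta k ^+ b * Num.conj (zeta k ^+ b').
under eq_bigr do rewrite !exprM rmorphXn -exprMn -/w.
rewrite mul0r sum_expr_root1_eq0 //.
  rewrite exprMn -rmorphXn -!exprM !(mulnC _ (n k)) !exprM zeta_expr_order //.
  by rewrite !expr1n rmorph1 mulr1.
apply: contra_neq b_neq => w1; apply: (zeta_exprn_inj b_lt b'_lt).
by rewrite -[RHS]mul1r -w1 /w -mulrA conj_zeta_mul mulr1.
Qed.

End RootsOfUnity.

Section Adjoint.
Variable R : realType.
Local Notation C := R[i].
Local Notation adj := (adj R).

Lemma adjM p q r (A : 'M[C]_(p, q)) (B : 'M[C]_(q, r)) :
  adj (A *m B) = adj B *m adj A.
Proof. by rewrite /Defs.adj map_mxM trmx_mul. Qed.

Lemma adjK p q (A : 'M[C]_(p, q)) : adj (adj A) = A.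
Proof. by apply/matrixP => i j; rewrite !mxE conjCK. Qed.

Lemma adjZ p q (c : C) (A : 'M[C]_(p, q)) : adj (c *: A) = Num.conj c *: adj A.
Proof. by apply/matrixP => i j; rewrite !mxE rmorphM. Qed.

Lemma adjD p q (A B : 'M[C]_(p, q)) : adj (A + B) = adj A + adj B.
Proof. by apply/matrixP => i j; rewrite !mxE rmorphD. Qed.

Lemma adj0 p q : adj (0 : 'M[C]_(p, q)) = 0.
Proof. by apply/matrixP => i j; rewrite !mxE rmorph0. Qed.

Lemma adj_sum p q I (r : seq I) (P : pred I) (F : I -> 'M[C]_(p, q)) :
  adj (\sum_(i <- r | P i) F i) = \sum_(i <- r | P i) adj (F i).
Proof. exact: (big_morph (@Defs.adj R p q) (@adjD p q) (adj0 p q)). Qed.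

Lemma adjZ_mulmx p q r (c : C) (A : 'M[C]_(p, q)) (B : 'M[C]_(p, r)) :
  adj (c *: A) *m B = Num.conj c *: (adj A *m B).
Proof. by rewrite adjZ -scalemxAl. Qed.

Lemma adj_delta_col m (i : 'I_m) : adj (delta_mx i 0 : 'cV[C]_m) = delta_mx 0 i.
Proof.
by apply/matrixP => a b; rewrite !mxE andbC; case: (_ && _); rewrite ?rmorph1 ?rmorph0.
Qed.

End Adjoint.

Lemma ge0_quadratic_linear_eq0 (R : realType) (z c : R[i]) : 0 <= c ->
  (forall s : R, 0 <= s%:C * z + (s * s)%:C * c) -> z = 0.
Proof.
case: z => zr zi; case: c => cr ci; rewrite lecE /= => /andP[/eqP -> cr_ge0] H.
have := H 1; simpc => /andP[/eqP -> _].
have D_gt0 : 0 < cr + 1 by lra.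
have := H (- zr / (cr + 1)); simpc => /andP[_].
have -> : - (zr / (cr + 1) * zr) + zr / (cr + 1) * (zr / (cr + 1)) * cr =
          - (zr / (cr + 1)) ^+ 2 by field; lra.
rewrite oppr_ge0 => sq_le0.
have /eqP : (zr / (cr + 1)) ^+ 2 = 0 by apply/eqP; rewrite eq_le sq_le0 sqr_ge0.
by rewrite sqrf_eq0 mulf_eq0 invr_eq0 (gt_eqF D_gt0) orbF => /eqP ->.
Qed.

Section InnerProduct.
Variables (R : realType) (N : nat) (n : nat -> nat).
Local Notation C := R[i].
Local Notation d := (hdim N n).
Local Notation adj := (adj R).
Local Notation dotv := (dotv R N n).
Local Notation outer := (outer R N n).

Lemma outer_mulmx (u v y : 'cV[C]_d) : outer u v *m y = dotv v y *: u.
Proof.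
by rewrite /Defs.outer -mulmxA (mx11_scalar (adj v *m y)) mul_mx_scalar.
Qed.

Lemma adj_outer (u v : 'cV[C]_d) : adj (outer u v) = outer v u.
Proof. by rewrite /Defs.outer adjM adjK. Qed.

Lemma outer_mul (u v w x : 'cV[C]_d) :
  outer u v *m outer w x = dotv v w *: outer u x.
Proof.
rewrite /Defs.outer mulmxA -(mulmxA u) (mx11_scalar (adj v *m w)).
by rewrite mul_mx_scalar -scalemxAl.
Qed.

Lemma dotvDl (u v w : 'cV[C]_d) : dotv (u + v) w = dotv u w + dotv v w.
Proof. by rewrite /Defs.dotv adjD mulmxDl mxE. Qed.

Lemma dotvDr (u v w : 'cV[C]_d) : dotv u (v + w) = dotv u v + dotv u w.
Proof. by rewrite /Defs.dotv mulmxDr mxE. Qed.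

Lemma dotvZl (u v : 'cV[C]_d) c : dotv (c *: u) v = Num.conj c * dotv u v.
Proof. by rewrite /Defs.dotv adjZ -scalemxAl mxE. Qed.

Lemma dotvZr (u v : 'cV[C]_d) c : dotv u (c *: v) = c * dotv u v.
Proof. by rewrite /Defs.dotv -scalemxAr mxE. Qed.

Lemma dotv_delta i (v : 'cV[C]_d) : dotv (delta_mx i 0) v = v i 0.
Proof. by rewrite /Defs.dotv adj_delta_col -rowE mxE. Qed.

Lemma dotv_mulmx_delta (x : 'cV[C]_d) (M : 'M[C]_d) j :
  dotv x (M *m delta_mx j 0) = (adj x *m M) 0 j.
Proof.
rewrite /Defs.dotv mulmxA -colE !mxE; apply: eq_bigr => k _.
by congr (_ * _); rewrite mxE; congr (adj x _ _); apply: val_inj.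
Qed.

Lemma psd_dot_eq0 (rho : 'M[C]_d) (x : 'cV[C]_d) :
  positive_op R N n rho -> dotv x (rho *m x) = 0 ->
  forall y, dotv x (rho *m y) = 0 /\ dotv y (rho *m x) = 0.
Proof.
move=> rho_psd xx_eq0 y.
set a := dotv x (rho *m y); set b := dotv y (rho *m x).
have c_ge0 : 0 <= dotv y (rho *m y) by exact: rho_psd.
have quad_ge0 t : 0 <= t * a + Num.conj t * b + Num.conj t * t * dotv y (rho *m y).
  have := rho_psd (x + t *: y).
  rewrite mulmxDr -scalemxAr !dotvDl !dotvDr !dotvZl !dotvZr xx_eq0 -/a -/b.
  by rewrite add0r !mulrA addrA.
have sum_eq0 : a + b = 0.
  apply: (ge0_quadratic_linear_eq0 c_ge0) => s.
  by have := quad_ge0 s%:C; rewrite [Num.conj _]conjc_real rmorphM /= mulrDr.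
have diff_eq0 : 'i * (a - b) = 0.
  apply: (ge0_quadratic_linear_eq0 c_ge0) => s.
  have := quad_ge0 ('i * s%:C).
  rewrite rmorphM /= [Num.conj s%:C]conjc_real conjCi.
  have -> : - 'i * s%:C * ('i * s%:C) = (s * s)%:C :> C.
    by rewrite mulrACA mulNr -expr2 sqr_i opprK mul1r rmorphM.
  suff -> : s%:C * ('i * (a - b)) = 'i * s%:C * a + - 'i * s%:C * b by [].
  ring.
have a_eq_b : a = b.
  apply/eqP; rewrite -subr_eq0; apply: contra_eqT diff_eq0 => ab_neq0.
  by rewrite mulf_neq0 // neq0Ci.
by move: sum_eq0; rewrite -a_eq_b -mulr2n => /eqP; rewrite mulrn_eq0 /= => /eqP.
Qed.

(* For the positive, hence hermitian, operators considered here the two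
   conditions are equivalent; requiring both spares proving hermiticity. *)
Definition in_kernel (rho : 'M[C]_d) (x : 'cV[C]_d) :=
  rho *m x = 0 /\ adj x *m rho = 0.

Lemma psd_in_kernel (rho : 'M[C]_d) (x : 'cV[C]_d) :
  positive_op R N n rho -> dotv x (rho *m x) = 0 -> in_kernel rho x.
Proof.
move=> rho_psd /(psd_dot_eq0 rho_psd) xrho_eq0; split.
  apply/matrixP => i j; rewrite (ord1 j) -dotv_delta mxE.
  by case: (xrho_eq0 (delta_mx i 0)).
apply/matrixP => i j; rewrite (ord1 i) -dotv_mulmx_delta mxE.
by case: (xrho_eq0 (delta_mx j 0)).
Qed.

End InnerProduct.

Section Kernel.
Variables (R : realType) (N : nat) (n : nat -> nat).
Local Notation C := R[i].
Local Notation d := (hdim N n).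
Local Notation adj := (adj R).
Local Notation dotv := (dotv R N n).

Implicit Types (rho : 'M[C]_d) (x y : 'cV[C]_d).

Lemma in_kernel0 rho : in_kernel rho 0.
Proof. by rewrite /in_kernel mulmx0 adj0 mul0mx. Qed.

Lemma in_kernelD rho x y : in_kernel rho x -> in_kernel rho y -> in_kernel rho (x + y).
Proof.
move=> [rx xr] [ry yr].
by rewrite /in_kernel mulmxDr adjD mulmxDl rx xr ry yr !addr0.
Qed.

Lemma in_kernelZ rho c x : in_kernel rho x -> in_kernel rho (c *: x).
Proof.
by move=> [rx xr]; rewrite /in_kernel -scalemxAr adjZ -scalemxAl rx xr !scaler0.
Qed.

Lemma in_kernelZ_inv rho c x : c != 0 -> in_kernel rho (c *: x) -> in_kernel rho x.
Proof. by move=> c_neq0 /(in_kernelZ c^-1); rewrite scalerA mulVf // scale1r. Qed.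

Lemma in_kernel_sum rho I (r : seq I) (P : pred I) (F : I -> 'cV[C]_d) :
  (forall i, P i -> in_kernel rho (F i)) -> in_kernel rho (\sum_(i <- r | P i) F i).
Proof.
move=> FP; elim/big_rec: _ => [|i x Pi Kx]; first exact: in_kernel0.
exact: in_kernelD (FP i Pi) Kx.
Qed.

Lemma in_kernel_outer rho u v y :
  in_kernel rho u -> in_kernel rho (outer R N n u v *m y).
Proof. by rewrite outer_mulmx; apply: in_kernelZ. Qed.

Lemma mulmx_eq0_in_kernel rho (L : 'M[C]_d) :
  (forall y, in_kernel rho (adj L *m y)) -> L *m rho = 0.
Proof.
move=> Lker; apply/matrixP => i j; rewrite mxE.
have [_ /matrixP/(_ 0 j)] := Lker (delta_mx i 0).
by rewrite adjM adjK adj_delta_col -mulmxA -rowE !mxE.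
Qed.

Lemma dotv_generator_kernel (Gam gam : bool -> bohr -> R) rho x :
  in_kernel rho x ->
  dotv x (generator R N n Gam gam rho *m x) =
  \sum_(L <- kraus R N n Gam) dotv (adj L *m x) (rho *m (adj L *m x)).
Proof.
move=> [rx xr].
have rhoAx p (A : 'M[C]_(p, d)) : A *m rho *m x = 0 by rewrite -mulmxA rx mulmx0.
have xrhoA p (A : 'M[C]_(d, p)) : adj x *m rho *m A = 0 by rewrite xr mul0mx.
rewrite /Defs.dotv /generator mulmxDl mulmxDr -scalemxAl -scalemxAr.
rewrite mulmxBl mulmxBr !mulmxA rhoAx xrhoA mul0mx subrr scaler0 add0r.
rewrite mulmx_sumr mulmx_suml summxE; apply: eq_bigr => L _.
rewrite mulmxBr mulmxBl -scalemxAr -scalemxAl mulmxDr mulmxDl !mulmxA rhoAx xrhoA.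
by rewrite !mul0mx add0r scaler0 subr0 adjM adjK.
Qed.

Lemma invariant_kernel_kraus_adj (Gam gam : bool -> bohr -> R) rho x L :
  positive_op R N n rho -> invariant_st R N n Gam gam rho ->
  in_kernel rho x -> L \in kraus R N n Gam -> in_kernel rho (adj L *m x).
Proof.
move=> rho_psd rho_inv x_ker L_kraus; apply: psd_in_kernel => //.
have terms_ge0 K : 0 <= dotv (adj K *m x) (rho *m (adj K *m x)) by exact: rho_psd.
have := dotv_generator_kernel Gam gam x_ker.
rewrite rho_inv mul0mx {1}/Defs.dotv mulmx0 mxE (big_rem L L_kraus) /= => /esym/eqP.
by rewrite paddr_eq0 ?sumr_ge0 // => /andP[/eqP].
Qed.

End Kernel.

Lemma big_ord_mulrb_eq (V : nmodType) (F : nat -> V) m i : (i < m)%N ->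
  \sum_(j < m) F j *+ (j == i :> nat) = F i.
Proof.
by move=> lt_im; under eq_bigr do rewrite mulrb; rewrite -big_mkcond big_ord1_eq lt_im.
Qed.

Section Levels.
Variables (R : realType) (N : nat) (n : nat -> nat).
Local Notation C := R[i].
Local Notation d := (hdim N n).
Local Notation adj := (adj R).
Local Notation dotv := (dotv R N n).
Local Notation outer := (outer R N n).
Local Notation ket_site := (ket_site R N n).

Lemma site_idx_eq_Some k a (lt_kN : (k < N)%N) (lt_an : (a < n k)%N) (x : basis N n) :
  site_idx N n x = Some (k, a) ->
  x = inr (existT (fun k0 : 'I_N => 'I_(n k0)) (Ordinal lt_kN) (Ordinal lt_an)).
Proof.
case: x => [//|[[k' lt_k'N] a']] /= [ek ea]; subst k'.
rewrite (bool_irrelevance lt_k'N lt_kN) in a' ea *.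
by congr (inr (existT _ _ _)); apply: val_inj.
Qed.

Lemma dotv_ket_site k a b : (k < N)%N -> (a < n k)%N -> (b < n k)%N ->
  dotv (ket_site k a) (ket_site k b) = (a == b)%:R.
Proof.
move=> lt_kN lt_an lt_bn.
pose x0 : basis N n :=
  inr (existT (fun k0 : 'I_N => 'I_(n k0)) (Ordinal lt_kN) (Ordinal lt_an)).
rewrite /Defs.dotv mxE (bigD1 (enum_rank x0)) //= big1 ?addr0; last first.
  move=> i ne_i; rewrite !mxE.
  case: eqP => [/site_idx_eq_Some e|_]; last by rewrite rmorph0 mul0r.
  by move: ne_i; rewrite -(enum_valK i) (e lt_kN lt_an) eqxx.
rewrite !mxE enum_rankK /= eqxx rmorph1 mul1r.
by rewrite (inj_eq (@Some_inj _)) xpair_eqE eqxx.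
Qed.

Definition levelmx k' k (f : nat -> nat -> C) : 'M[C]_d :=
  \sum_(b < n k') \sum_(a < n k) f b a *: outer (ket_site k' b) (ket_site k a).

Lemma eq_levelmx k' k f g :
  (forall b a, (b < n k')%N -> (a < n k)%N -> f b a = g b a) ->
  levelmx k' k f = levelmx k' k g.
Proof. by move=> fg; apply: eq_bigr => b _; apply: eq_bigr => a _; rewrite fg. Qed.

Lemma adj_levelmx k' k f :
  adj (levelmx k' k f) = levelmx k k' (fun a b => Num.conj (f b a)).
Proof.
rewrite /levelmx adj_sum exchange_big; apply: eq_bigr => a _.
by rewrite adj_sum; apply: eq_bigr => b _; rewrite adjZ adj_outer.
Qed.

Lemma levelmx_ket k' k f a : (k < N)%N -> (a < n k)%N ->
  levelmx k' k f *m ket_site k a = \sum_(b < n k') f b a *: ket_site k' b.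
Proof.
move=> lt_kN lt_an; rewrite /levelmx mulmx_suml; apply: eq_bigr => b _.
rewrite mulmx_suml -(big_ord_mulrb_eq (fun a' => f b a' *: ket_site k' b) lt_an).
apply: eq_bigr => a' _.
by rewrite -scalemxAl outer_mulmx dotv_ket_site // scaler_nat scalerMnr.
Qed.

Lemma outer_levelmx (u : 'cV[C]_d) k1 k0 g b : (k1 < N)%N -> (b < n k1)%N ->
  outer u (ket_site k1 b) *m levelmx k1 k0 g =
  \sum_(a < n k0) g b a *: outer u (ket_site k0 a).
Proof.
move=> lt_k1N lt_bn; rewrite /levelmx mulmx_sumr.
pose F b' := \sum_(a < n k0) g b' a *: outer u (ket_site k0 a).
rewrite -[RHS]/(F b) -(big_ord_mulrb_eq F lt_bn).
apply: eq_bigr => b' _; rewrite mulmx_sumr -sumrMnl; apply: eq_bigr => a _.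
rewrite -scalemxAr outer_mul dotv_ket_site // eq_sym.
by rewrite scalerA mulrC -scalerA scaler_nat.
Qed.

Lemma levelmx_mul k2 k1 k0 f g : (k1 < N)%N ->
  levelmx k2 k1 f *m levelmx k1 k0 g =
  levelmx k2 k0 (fun c a => \sum_(b < n k1) f c b * g b a).
Proof.
move=> lt_k1N; rewrite {1}/levelmx mulmx_suml; apply: eq_bigr => c _.
rewrite mulmx_suml.
under eq_bigr => b _ do
  rewrite -scalemxAl (outer_levelmx _ _ _ lt_k1N (ltn_ord b)) scaler_sumr.
rewrite exchange_big; apply: eq_bigr => a _.
by rewrite scaler_suml; apply: eq_bigr => b _; rewrite scalerA.
Qed.

Lemma in_kernel_levelmx rho k' k f y :
  (forall b, (b < n k')%N -> in_kernel rho (ket_site k' b)) ->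
  in_kernel rho (levelmx k' k f *m y).
Proof.
move=> kets_ker; rewrite /levelmx mulmx_suml; apply: in_kernel_sum => b _.
rewrite mulmx_suml; apply: in_kernel_sum => a _.
by rewrite -scalemxAl; apply/in_kernelZ/in_kernel_outer/kets_ker.
Qed.

End Levels.

Section Transport.
Variables (R : realType) (N : nat) (n : nat -> nat).
Local Notation C := R[i].
Local Notation adj := (adj R).
Local Notation ket_site := (ket_site R N n).
Local Notation levelmx := (@levelmx R N n).
Local Notation Zk := (Zk R N n).
Local Notation invsqrt := (invsqrt R).

Lemma conj_invsqrt (x : R) : Num.conj (invsqrt x) = invsqrt x.
Proof. exact: conjc_real. Qed.

Lemma invsqrt_natr_mul m : (0 < m)%N -> invsqrt m%:R * invsqrt m%:R * m%:R = 1 :> C.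
Proof.
move=> m_gt0; rewrite -(rmorph_nat (real_complex R)) /invsqrt /rC; simpc.
by rewrite -expr2 exprVn sqr_sqrtr ?ler0n // mulVf // pnatr_eq0 -lt0n.
Qed.

Lemma Zk_levelmx k :
  Zk k = levelmx k.+1 k (fun b a => invsqrt (n k)%:R * zeta R n k ^+ (b * a)).
Proof.
rewrite /Zk /levelmx scaler_sumr; apply: eq_bigr => b _.
by rewrite scaler_sumr; apply: eq_bigr => a _; rewrite scalerA.
Qed.

Variable k : nat.
Hypotheses (lt_kN : (k.+1 < N)%N) (le_n : (n k.+1 <= n k)%N).

Lemma Zk_mul_adj :
  Zk k *m adj (Zk k) = levelmx k.+1 k.+1 (fun b b' => (b == b')%:R).
Proof.
rewrite Zk_levelmx adj_levelmx levelmx_mul 1?ltnW //.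
apply: eq_levelmx => b b' lt_b lt_b'.
have lt_bk := leq_trans lt_b le_n; have lt_b'k := leq_trans lt_b' le_n.
transitivity (invsqrt (n k)%:R * invsqrt (n k)%:R *
   \sum_(a < n k) zeta R n k ^+ (b * a) * Num.conj (zeta R n k ^+ (b' * a))).
  by rewrite mulr_sumr; apply: eq_bigr => a _; rewrite rmorphM /= conj_invsqrt; ring.
rewrite zeta_orthogonality // mulrCA invsqrt_natr_mul ?mulr1 //.
exact: leq_ltn_trans lt_bk.
Qed.

Lemma Zk_adj_ket b : (b < n k.+1)%N ->
  Zk k *m (adj (Zk k) *m ket_site k.+1 b) = ket_site k.+1 b.
Proof.
move=> lt_b; rewrite mulmxA Zk_mul_adj levelmx_ket //.
rewrite -[RHS](big_ord_mulrb_eq _ lt_b).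
by apply: eq_bigr => b' _; rewrite scaler_nat.
Qed.

Lemma absZ_mul_adj_Zk : absZ R N n k *m adj (Zk k) = adj (Zk k).
Proof.
rewrite /absZ -mulmxA Zk_mul_adj Zk_levelmx adj_levelmx levelmx_mul //.
apply: eq_levelmx => a b _ lt_b.
under eq_bigr do rewrite mulr_natr.
exact: (big_ord_mulrb_eq (fun b0 => Num.conj (_ * zeta R n k ^+ (b0 * a))) lt_b).
Qed.

End Transport.

Section KrausKernel.
Variables (R : realType) (N : nat) (n : nat -> nat) (Gam gam : bool -> bohr -> R).
Local Notation C := R[i].
Local Notation adj := (adj R).
Local Notation Zk := (Zk R N n).
Local Notation kraus := (kraus R N n Gam).

Lemma Zk_mem_kraus k : (k.+1 < N)%N ->
  rC R (Num.sqrt (Gam false (OmK k))) *: Zk k \in kraus /\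
  rC R (Num.sqrt (Gam true (OmK k))) *: adj (Zk k) \in kraus.
Proof.
move=> lt_kN.
have k_iota : k \in iota 0 N.-1 by rewrite mem_iota add0n ltn_predRL.
by rewrite !mem_cat; split; apply/orP; right; apply/flatten_mapP; exists k => //;
  rewrite !inE eqxx ?orbT.
Qed.

Lemma conj_rC_sqrt_neq0 (x : R) : 0 < x -> Num.conj (rC R (Num.sqrt x)) != 0.
Proof.
by move=> x_gt0; rewrite conjC_eq0 /rC eq_complex /= eqxx andbT gt_eqF ?sqrtr_gt0.
Qed.

Hypotheses (le_n : forall k, (k.+1 < N)%N -> (n k.+1 <= n k)%N)
  (Gam_gt0 : forall e w, valid_bohr N w -> 0 < Gam e w).
Variable rho : 'M[C]_(hdim N n).
Hypotheses (rho_psd : positive_op R N n rho) (rho_inv : invariant_st R N n Gam gam rho)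
  (absZ_ker : forall y, in_kernel rho (absZ R N n 0 *m y))
  (Vgen_ker : forall u, Vgen R N n u -> in_kernel rho u).

Lemma in_kernel_Zk k x : (k.+1 < N)%N -> in_kernel rho x ->
  in_kernel rho (Zk k *m x) /\ in_kernel rho (adj (Zk k) *m x).
Proof.
move=> lt_kN x_ker; have [Z_kraus Zadj_kraus] := Zk_mem_kraus lt_kN.
have := invariant_kernel_kraus_adj rho_psd rho_inv x_ker Z_kraus.
have := invariant_kernel_kraus_adj rho_psd rho_inv x_ker Zadj_kraus.
rewrite (adjZ_mulmx _ (adj (Zk k))) (adjZ_mulmx _ (Zk k)) adjK.
have c_neq0 e : Num.conj (rC R (Num.sqrt (Gam e (OmK k)))) != 0.
  exact/conj_rC_sqrt_neq0/Gam_gt0.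
by move=> /(in_kernelZ_inv (c_neq0 _)) Zx /(in_kernelZ_inv (c_neq0 _)).
Qed.

Lemma in_kernel_adj_Z0 y : (1 < N)%N -> in_kernel rho (adj (Zk 0) *m y).
Proof. by move=> lt_1N; rewrite -(absZ_mul_adj_Zk R lt_1N (le_n lt_1N)) -mulmxA. Qed.

Lemma in_kernel_ket_site k b : (0 < k < N)%N -> (b < n k)%N ->
  in_kernel rho (ket_site R N n k b).
Proof.
elim: k b => [//|k IH] b /andP[_ lt_kN] lt_b.
rewrite -(Zk_adj_ket R lt_kN (le_n lt_kN) lt_b).
apply: (in_kernel_Zk lt_kN _).1.
case: k IH lt_kN {lt_b} => [|k] IH lt_kN; first exact: in_kernel_adj_Z0.
rewrite Zk_levelmx adj_levelmx; apply: in_kernel_levelmx => a lt_a.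
by apply: IH => //=; apply: ltnW.
Qed.

Lemma in_kernel_ran_Zk k y : (k.+1 < N)%N ->
  in_kernel rho (Zk k *m y) /\ in_kernel rho (adj (Zk k) *m y).
Proof.
move=> lt_kN; split.
  by rewrite Zk_levelmx; apply: in_kernel_levelmx => b; apply: in_kernel_ket_site.
case: k lt_kN => [|k] lt_kN; first exact: in_kernel_adj_Z0.
rewrite Zk_levelmx adj_levelmx; apply: in_kernel_levelmx => a.
by apply: in_kernel_ket_site => /=; apply: ltnW.
Qed.

Lemma in_kernel_ran_kraus L y : L \in kraus ->
  in_kernel rho (L *m y) /\ in_kernel rho (adj L *m y).
Proof.
have phi0_ker : in_kernel rho (phi R N n 0 0).
  by apply: Vgen_ker; right; right; left; exists 0%N.
have phiN_ker : in_kernel rho (phi R N n N.-1 0).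
  by apply: Vgen_ker; right; right; right; left; exists 0%N.
have pm_ker s : in_kernel rho (ket_pm R N n s).
  by apply: Vgen_ker; case: s; [right; left|left].
rewrite mem_cat => /orP[|/flatten_mapP[k]].
  rewrite !inE => /or4P[] /eqP->; rewrite ?adjZ ?adj_outer ?adj0 -?scalemxAl ?mul0mx;
    by split; try apply: in_kernelZ; try apply: in_kernel_outer; try apply: in_kernel0.
rewrite mem_iota add0n ltn_predRL => lt_kN; rewrite !inE.
(* Generalizing [Zk k] prevents [scalemxAl] from unfolding it. *)
have [Zy Zadjy] := in_kernel_ran_Zk y lt_kN; move: (Zk k) Zy Zadjy => Z Zy Zadjy.
by case/orP=> /eqP->; rewrite adjZ ?adjK -!scalemxAl; split; apply: in_kernelZ.
Qed.

End KrausKernel.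

Theorem corollary3p18 (R : realType) (N : nat) (n : nat -> nat)
    (Gam gam : bool -> bohr -> R)
    (HN : (2 <= N)%N)
    (Hmono : forall k, (k.+1 < N)%N -> (n k.+1 <= n k)%N)
    (Hpos : forall k, (k < N)%N -> (1 <= n k)%N)
    (HGam : forall (e : bool) (w : bohr), valid_bohr N w -> 0 < Gam e w)
    (rho : 'M[R[i]]_(hdim N n)) :
  is_state R N n rho ->
  invariant_st R N n Gam gam rho ->
  supported R N n rho
    (ominus R N n (Vsp R N n) (ran R N n (absZ R N n 0))) ->
  supported R N n rho (Wsp R N n Gam).
Proof.
move=> [rho_psd _] rho_inv rho_supp.
have Vgen_ker u : Vgen R N n u -> in_kernel rho u.
  by move=> Vu; apply: psd_in_kernel => //; have [/(_ u Vu)] := rho_supp u.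
have absZ_ker y : in_kernel rho (absZ R N n 0 *m y).
  apply: psd_in_kernel => //.
  by have [_ /(_ _ (ex_intro _ y erefl))] := rho_supp (absZ R N n 0 *m y).
have ran_ker := in_kernel_ran_kraus Hmono HGam rho_psd rho_inv absZ_ker Vgen_ker.
move=> u L L_kraus; rewrite !mulmxA !mulmx_eq0_in_kernel ?mul0mx // => y.
  by rewrite adjK; case: (ran_ker L y L_kraus).
by case: (ran_ker L y L_kraus).
Qed.
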